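(* The set $V:=\{\alpha\in\ell^\infty_w:\ G_{\tilde\psi,\psi}\alpha=\alpha\}$ is a closed subspace of $\ell^\infty_w$. Consequently, $(\mathcal H^\infty_w,\|\cdot\|_{\mathcal H^\infty_w})$ is a Banach space.
   Context: Standing setting. $\mathcal H$ is a separable complex Hilbert space with inner product $\langle\cdot,\cdot\rangle$, linear in the first and conjugate-linear in the second argument. $X$ is a countable index set. A weight is a map $w:X\to(0,\infty)$; $\ell^\infty_w$ is the Banach space of sequences $\alpha=(\alpha_k)_{k\in X}$ with $\|\alpha\|_{\ell^\infty_w}:=\sup_{k\in X}|\alpha_k|w(k)<\infty$. $\psi=(\psi_k)_{k\in X}$ is a frame for $\mathcal H$ and $\tilde\psi=(\tilde\psi_k)_{k\in X}$ is a dual frame, i.e. $f=\sum_{k}\langle f,\tilde\psi_k\rangle\psi_k=\sum_k\langle f,\psi_k\rangle\tilde\psi_k$ for all $f\in\mathcal H$ (unconditional convergence in $\mathcal H$). The cross Gram matrix $G_{\tilde\psi,\psi}$ has entries $(G_{\tilde\psi,\psi})_{k,l}=\langle\psi_l,\tilde\psi_k\rangle$ and acts by $(G_{\tilde\psi,\psi}\alpha)_k=\sum_{l\in X}\langle\psi_l,\tilde\psi_k\rangle\alpha_l$; it is assumed to define a bounded operator on $\ell^\infty_w$, meaning these series converge absolutely for every $\alpha\in\ell^\infty_w$ and $G_{\tilde\psi,\psi}:\ell^\infty_w\to\ell^\infty_w$ is bounded (equivalently $\|G_{\tilde\psi,\psi}\|_{\mathcal B(\ell^\infty_w)}=\sup_{k}\sum_{l}|\langle\psi_l,\tilde\psi_k\rangle|\,w(k)/w(l)<\infty$).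 Let $\mathcal H^{00}:=\operatorname{span}\{\tilde\psi_k:k\in X\}$ (finite linear combinations), a dense subspace of $\mathcal H$. Equip $\mathcal H$ with the locally convex topology $\sigma(\mathcal H,\mathcal H^{00})$ generated by the seminorms $f\mapsto|\langle f,v\rangle|$, $v\in\mathcal H^{00}$ (Hausdorff and metrizable). Let $\overline{\mathcal H}$ be the completion of $\mathcal H$ in this topology, with $\mathcal H\subseteq\overline{\mathcal H}$, and for each $v\in\mathcal H^{00}$ let $f\mapsto\langle f,v\rangle_{\overline{\mathcal H},\mathcal H^{00}}$ be the unique continuous linear extension of $f\mapsto\langle f,v\rangle$ to $\overline{\mathcal H}$. Define $\mathcal H^\infty_w$ as the set of all $f\in\overline{\mathcal H}$ for which there is a sequence $(f_n)_{n\ge1}\subseteq\mathcal H$ converging to $f$ in $\sigma(\overline{\mathcal H},\mathcal H^{00})$ (i.e. $\langle f_n,v\rangle\to\langle f,v\rangle_{\overline{\mathcal H},\mathcal H^{00}}$ for all $v\in\mathcal H^{00}$) with $\sup_{n\in\mathbb N,k\in X}|\langle f_n,\tilde\psi_k\rangle|w(k)<\infty$. The coefficient operator is $C_{\tilde\psi}:\mathcal H^\infty_w\to\ell^\infty_w$, $C_{\tilde\psi}f=(\langle f,\tilde\psi_k\rangle_{\overline{\mathcal H},\mathcal H^{00}})_{k\in X}$, and the norm on $\mathcal H^\infty_w$ is $\|f\|_{\mathcal H^\infty_w}:=\|C_{\tilde\psi}f\|_{\ell^\infty_w}$. *)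

From HB Require Import structures.
From mathcomp Require Import all_boot all_order all_algebra.
From mathcomp Require Import finmap.
From mathcomp Require Import classical_sets reals.
From mathcomp Require Import complex.
Set Implicit Arguments. Unset Strict Implicit. Unset Printing Implicit Defensive.
Import Order.TTheory GRing.Theory Num.Theory.
Local Open Scope ring_scope.
Local Open Scope complex_scope.

Section Defs.
Variable R : realType.
Local Notation C := R[i].

Definition cabs (z : C) : R := Normc.normc z.
Definition cconj (z : C) : C := z^*.

Section Hilbert.
Variable H : lmodType C.
Variable ip : H -> H -> C.

Definition is_inner_product : Prop :=
  [/\ forall a f g h, ip (a *: f + g) h = a * ip f h + ip g h,
      forall f g, ip g f = cconj (ip f g),
      forall f, (0 <= complex.Re (ip f f) /\ complex.Im (ip f f) = 0) &
      forall f, ip f f = 0 -> f = 0].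

Definition normH (f : H) : R := Num.sqrt (complex.Re (ip f f)).

Definition hilbert_complete : Prop :=
  forall u : nat -> H,
    (forall eps : R, 0 < eps -> exists N, forall n m, (N <= n)%N -> (N <= m)%N ->
       normH (u n - u m) < eps) ->
    exists f, forall eps : R, 0 < eps -> exists N, forall n, (N <= n)%N ->
       normH (u n - f) < eps.

Definition hilbert_separable : Prop :=
  exists d : nat -> H, forall f (eps : R), 0 < eps -> exists n, normH (f - d n) < eps.
End Hilbert.

(* ----- unconditional convergence of a series indexed by a countable set X:
   the net of finite partial sums (directed by inclusion) converges to s ----- *)
Definition uncond_sum (V : zmodType) (nrm : V -> R) (X : choiceType)
    (u : X -> V) (s : V) : Prop :=
  forall eps : R, 0 < eps -> exists F0 : {fset X}, forall F : {fset X},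
    fsubset F0 F -> nrm (s - \sum_(k <- F) u k) < eps.

Section Frames.
Variables (H : lmodType C) (ip : H -> H -> C) (X : countType).

(* frame: A ||f||^2 <= sum_k |<f,psi_k>|^2 <= B ||f||^2, the (possibly infinite)
   sum of nonnegative terms being the supremum of its finite partial sums *)
Definition is_frame (psi : X -> H) : Prop :=
  exists A B : R, [/\ 0 < A, 0 < B &
    forall f : H,
      (forall F : {fset X}, \sum_(k <- F) cabs (ip f (psi k)) ^+ 2 <= B * normH ip f ^+ 2)
   /\ (forall c : R, c < A * normH ip f ^+ 2 ->
        exists F : {fset X}, c < \sum_(k <- F) cabs (ip f (psi k)) ^+ 2)].

Definition is_dual_frame (psi tpsi : X -> H) : Prop :=
  is_frame tpsi /\
  forall f : H,
    uncond_sum (normH ip) (fun k => ip f (tpsi k) *: psi k) f /\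
    uncond_sum (normH ip) (fun k => ip f (psi k) *: tpsi k) f.

Definition gram (psi tpsi : X -> H) (k l : X) : C := ip (psi l) (tpsi k).

Definition ell_inf (w : X -> R) (a : X -> C) : Prop :=
  exists M : R, forall k, cabs (a k) * w k <= M.

Definition norm_ell_inf (w : X -> R) (a : X -> C) : R :=
  sup (range (fun k => cabs (a k) * w k)).

Definition gram_bounded (w : X -> R) (psi tpsi : X -> H) : Prop :=
  exists M : R, forall (k : X) (F : {fset X}),
    \sum_(l <- F) cabs (gram psi tpsi k l) * w k / w l <= M.

(* V = { a in l^infty_w : G a = a }, where (G a)_k = sum_l G_{k,l} a_l *)
Definition gram_fixed (w : X -> R) (psi tpsi : X -> H) (a : X -> C) : Prop :=
  ell_inf w a /\
  forall k, uncond_sum cabs (fun l => gram psi tpsi k l * a l) (a k).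

Definition closed_subspace_ell_inf (w : X -> R) (S : (X -> C) -> Prop) : Prop :=
  [/\ (forall a, S a -> ell_inf w a),
      S (fun _ => 0),
      (forall (c : C) a b, S a -> S b -> S (fun k => c * a k + b k)) &
      (forall (an : nat -> X -> C) (a : X -> C),
         (forall n, S (an n)) -> ell_inf w a ->
         (forall eps : R, 0 < eps -> exists N, forall n, (N <= n)%N ->
            norm_ell_inf w (fun k => an n k - a k) < eps) ->
         S a)].

Definition in_H00 (tpsi : X -> H) (v : H) : Prop :=
  exists (F : {fset X}) (c : X -> C), v = \sum_(k <- F) c k *: tpsi k.

Section Completion.
Variables (tpsi : X -> H) (Hb : lmodType C) (iota : H -> Hb) (pair : Hb -> H -> C).

Definition sigma_cvg (Fn : nat -> Hb) (F : Hb) : Prop :=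
  forall v, in_H00 tpsi v -> forall eps : R, 0 < eps ->
    exists N, forall n, (N <= n)%N -> cabs (pair (Fn n) v - pair F v) < eps.

Definition sigma_cauchy (Fn : nat -> Hb) : Prop :=
  forall v, in_H00 tpsi v -> forall eps : R, 0 < eps ->
    exists N, forall n m, (N <= n)%N -> (N <= m)%N ->
      cabs (pair (Fn n) v - pair (Fn m) v) < eps.

(* (Hb, iota, pair) is a completion of (H, sigma(H,H^00)):
   Hb is a vector space containing H (via the linear map iota), its topology is
   the weak topology induced by the functionals pair _ v (v in H^00), which are
   linear and extend <_, v>; Hb is Hausdorff, complete (it is metrizable, so
   sequential completeness suffices) and H is (sequentially) dense in it. *)
Definition is_sigma_completion : Prop :=
  [/\ forall (a : C) f g, iota (a *: f + g) = a *: iota f + iota g,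
      forall v, in_H00 tpsi v -> forall (a : C) F G,
        pair (a *: F + G) v = a * pair F v + pair G v,
      forall v f, in_H00 tpsi v -> pair (iota f) v = ip f v,
      forall F, (forall v, in_H00 tpsi v -> pair F v = 0) -> F = 0 &
      (forall F, exists fn : nat -> H, sigma_cvg (fun n => iota (fn n)) F) /\
      (forall Fn : nat -> Hb, sigma_cauchy Fn -> exists F, sigma_cvg Fn F)].

Definition Hinf (w : X -> R) (F : Hb) : Prop :=
  exists fn : nat -> H, sigma_cvg (fun n => iota (fn n)) F /\
    exists M : R, forall n k, cabs (ip (fn n) (tpsi k)) * w k <= M.

Definition coef_tpsi (F : Hb) : X -> C := fun k => pair F (tpsi k).

Definition norm_Hinf (w : X -> R) (F : Hb) : R := norm_ell_inf w (coef_tpsi F).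
End Completion.
End Frames.

Definition banach_subspace (V : lmodType C) (S : V -> Prop) (nrm : V -> R) : Prop :=
  [/\ S 0,
      (forall (a : C) f g, S f -> S g -> S (a *: f + g)),
      (forall f, S f -> nrm f = 0 -> f = 0) /\
      (forall (a : C) f, S f -> nrm (a *: f) = cabs a * nrm f),
      (forall f g, S f -> S g -> nrm (f + g) <= nrm f + nrm g) &
      (forall fn : nat -> V, (forall n, S (fn n)) ->
         (forall eps : R, 0 < eps -> exists N, forall n m, (N <= n)%N -> (N <= m)%N ->
            nrm (fn n - fn m) < eps) ->
         exists f, S f /\ forall eps : R, 0 < eps -> exists N, forall n, (N <= n)%N ->
            nrm (fn n - f) < eps)].
End Defs.

From HB Require Import structures.
From mathcomp Require Import all_boot all_order all_algebra.
From mathcomp Require Import finmap.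
From mathcomp Require Import classical_sets reals.
From mathcomp Require Import complex.
From mathcomp Require Import boolp.
From mathcomp Require Import ring lra.
Set Implicit Arguments. Unset Strict Implicit. Unset Printing Implicit Defensive.
Import Order.TTheory GRing.Theory Num.Theory.
Local Open Scope ring_scope.
Local Open Scope complex_scope.

(* Coefficients identify H^infty_w with V: for f in H the coefficient sequence
   C f is fixed by G (because f = sum_l <f, tpsi_l> psi_l), this survives
   bounded pointwise limits, hence holds on H^infty_w; conversely the partial
   sums sum_l a_l psi_l of a fixed a in l^infty_w have bounded coefficients
   converging to (G a)_k = a_k, so they approximate an element of H^infty_w
   with coefficients a.  V is closed in l^infty_w because G is bounded there,
   so a norm-Cauchy sequence in H^infty_w has coefficients converging in
   l^infty_w to some a in V; the weak completeness of Hbar provides the limit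
   F, and C F = a puts F back in H^infty_w. *)

Section ComplexModulus.
Variable R : realType.
Implicit Types z : R[i].

Lemma cabsC z : (cabs z)%:C = `|z|.
Proof. by case: z. Qed.

Lemma cabs_ge0 z : 0 <= cabs z.
Proof. by case: z => a b; rewrite /cabs /= sqrtr_ge0. Qed.

Lemma cabs0 : cabs (0 : R[i]) = 0.
Proof. exact: Normc.normc0. Qed.

Lemma cabs_eq0 z : cabs z = 0 -> z = 0.
Proof. exact: Normc.eq0_normc. Qed.

Lemma cabsM z1 z2 : cabs (z1 * z2) = cabs z1 * cabs z2.
Proof. exact: Normc.normcM. Qed.

Lemma cabsD z1 z2 : cabs (z1 + z2) <= cabs z1 + cabs z2.
Proof. exact: le_normcD. Qed.

Lemma cabsN z : cabs (- z) = cabs z.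
Proof. exact: normcN. Qed.

Lemma cabsB z1 z2 : cabs (z1 - z2) = cabs (z2 - z1).
Proof. by rewrite -cabsN opprB. Qed.

Lemma cabsJ z : cabs (conjc z) = cabs z.
Proof. by case: z => a b; rewrite /cabs /= sqrrN. Qed.

Lemma cabs_subr_le z1 z2 z3 : cabs (z1 - z3) <= cabs (z1 - z2) + cabs (z2 - z3).
Proof. by have := cabsD (z1 - z2) (z2 - z3); rewrite addrA subrK. Qed.

Lemma cabs_le_subr z1 z2 : cabs z2 <= cabs z1 + cabs (z1 - z2).
Proof. by have := cabs_subr_le z2 z1 0; rewrite !subr0 cabsB addrC. Qed.

Lemma cabs_sum (I : Type) (s : seq I) (F : I -> R[i]) :
  cabs (\sum_(i <- s) F i) <= \sum_(i <- s) cabs (F i).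
Proof.
elim: s => [|x s IH]; first by rewrite !big_nil cabs0.
by rewrite !big_cons; apply: le_trans (cabsD _ _) _; exact: lerD.
Qed.
End ComplexModulus.

Section InnerProduct.
Variables (R : realType) (H : lmodType R[i]) (ip : H -> H -> R[i]).
Hypothesis hip : is_inner_product ip.

Lemma ipDZ a f g h : ip (a *: f + g) h = a * ip f h + ip g h.
Proof. by case: hip. Qed.

Lemma ipJ f g : ip g f = conjc (ip f g).
Proof. by case: hip. Qed.

Lemma ip0l h : ip 0 h = 0.
Proof.
have E := ipDZ 1 0 0 h; rewrite scaler0 addr0 mul1r in E.
by apply: (addrI (ip 0 h)); rewrite addr0 -E.
Qed.

Lemma ipD f g h : ip (f + g) h = ip f h + ip g h.
Proof. by rewrite -[f]scale1r ipDZ mul1r scale1r. Qed.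

Lemma ipZ a f h : ip (a *: f) h = a * ip f h.
Proof. by rewrite -[a *: f]addr0 ipDZ ip0l addr0. Qed.

Lemma ipB f g h : ip (f - g) h = ip f h - ip g h.
Proof. by rewrite ipD -scaleN1r ipZ mulN1r. Qed.

Lemma ip_suml (I : Type) (s : seq I) (F : I -> H) h :
  ip (\sum_(l <- s) F l) h = \sum_(l <- s) ip (F l) h.
Proof.
elim: s => [|x s IH]; first by rewrite !big_nil ip0l.
by rewrite !big_cons ipD IH.
Qed.

Lemma ip0r h : ip h 0 = 0.
Proof. by rewrite ipJ ip0l rmorph0. Qed.

Lemma ipDr f g h : ip h (f + g) = ip h f + ip h g.
Proof. by rewrite ipJ ipD rmorphD /= -!ipJ. Qed.

Lemma ipZr a f h : ip h (a *: f) = conjc a * ip h f.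
Proof. by rewrite ipJ ipZ rmorphM /= -ipJ. Qed.

Lemma ipBr f g h : ip h (f - g) = ip h f - ip h g.
Proof. by rewrite ipJ ipB rmorphB /= -!ipJ. Qed.

Lemma ip_sumr (I : Type) (s : seq I) (c : I -> R[i]) (F : I -> H) h :
  ip h (\sum_(l <- s) c l *: F l) = \sum_(l <- s) conjc (c l) * ip h (F l).
Proof.
elim: s => [|x s IH]; first by rewrite !big_nil ip0r.
by rewrite !big_cons ipDr ipZr IH.
Qed.

Lemma ip_real f : ip f f = (complex.Re (ip f f))%:C.
Proof.
by case: hip => _ _ /(_ f) [_]; case: (ip f f) => a b /= ->.
Qed.

Lemma ip_ge0 f : 0 <= ip f f.
Proof. by rewrite ip_real ler0c; case: hip => _ _ /(_ f) []. Qed.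

Lemma normH_ge0 f : 0 <= normH ip f.
Proof. exact: sqrtr_ge0. Qed.

Lemma cauchy_schwarzC x y : `|ip x y| ^+ 2 <= ip x x * ip y y.
Proof.
set t := ip x y; set c := ip y y.
have [c0|cn0] := eqVneq c 0.
  have y0 : y = 0 by case: hip => _ _ _; apply.
  by rewrite /t /c y0 !ip0r normr0 expr0n /= mulr0.
have cpos : 0 < c by rewrite lt_def cn0 ip_ge0.
have cJ : conjc c = c by rewrite /c -ipJ.
pose z := x - (t / c) *: y.
have hz : ip z z = ip x x - t * conjc t / c.
  rewrite /z !(ipB, ipBr, ipZ, ipZr) rmorphM /= fmorphV /= cJ (ipJ x y) -/t -/c.
  by field.
by have := ip_ge0 z; rewrite hz subr_ge0 ler_pdivrMr // sqr_normc.
Qed.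

Lemma cauchy_schwarz x y : cabs (ip x y) <= normH ip x * normH ip y.
Proof.
have := cauchy_schwarzC x y.
rewrite (ip_real x) (ip_real y) -cabsC -rmorphXn -rmorphM lecR => h.
rewrite /normH -sqrtrM; last by rewrite -lecR -ip_real ip_ge0.
by rewrite -(ger0_norm (cabs_ge0 (ip x y))) -sqrtr_sqr ler_wsqrtr.
Qed.
End InnerProduct.

Section ComplexLimits.
Variable R : realType.
Implicit Types (u v : nat -> R[i]) (a b : R[i]).

Definition cvgC u a := forall eps : R, 0 < eps -> exists N, forall n, (N <= n)%N ->
  cabs (u n - a) < eps.

Lemma cvgC_cst a : cvgC (fun _ => a) a.
Proof. by move=> e e0; exists 0%N => n _; rewrite subrr cabs0. Qed.

Lemma cvgC_ext u v a : (forall n, u n = v n) -> cvgC u a -> cvgC v a.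
Proof. by move=> h ha e e0; have [N hN] := ha _ e0; exists N => n hn; rewrite -h; apply: hN. Qed.

Lemma cvgC_bound u a (B : R) (N : nat) :
  (forall n, (N <= n)%N -> cabs (u n) <= B) -> cvgC u a -> cabs a <= B.
Proof.
move=> hB ha; apply/ler_addgt0Pr => e e0.
have [N' h] := ha _ e0; have := h (maxn N N') (leq_maxr _ _).
have := hB (maxn N N') (leq_maxl _ _).
have := cabs_subr_le a (u (maxn N N')) 0; rewrite !subr0 cabsB => *; lra.
Qed.

Lemma cvgC_uniq u a b : cvgC u a -> cvgC u b -> a = b.
Proof.
move=> ha hb; apply/eqP; rewrite -subr_eq0; apply/eqP/cabs_eq0/eqP.
rewrite eq_le cabs_ge0 andbT; apply/ler_addgt0Pr => e e0; rewrite add0r.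
have e2 : 0 < e / 2 by rewrite divr_gt0.
have [N1 h1] := ha _ e2; have [N2 h2] := hb _ e2.
have := h1 (maxn N1 N2) (leq_maxl _ _); have := h2 (maxn N1 N2) (leq_maxr _ _).
have := cabs_subr_le a (u (maxn N1 N2)) b; rewrite (cabsB a (u _)) => *; lra.
Qed.

Lemma cvgC_D u v a b : cvgC u a -> cvgC v b -> cvgC (fun n => u n + v n) (a + b).
Proof.
move=> ha hb e e0; have e2 : 0 < e / 2 by rewrite divr_gt0.
have [N1 h1] := ha _ e2; have [N2 h2] := hb _ e2.
exists (maxn N1 N2) => n hn.
have := h1 n (leq_trans (leq_maxl _ _) hn); have := h2 n (leq_trans (leq_maxr _ _) hn).
have -> : u n + v n - (a + b) = (u n - a) + (v n - b) by ring.
have := cabsD (u n - a) (v n - b) => *; lra.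
Qed.

Lemma cvgC_M c u a : cvgC u a -> cvgC (fun n => c * u n) (c * a).
Proof.
move=> ha e e0; have c1 : 0 < cabs c + 1 by have := cabs_ge0 c; lra.
have [N h] := ha _ (divr_gt0 e0 c1); exists N => n hn.
rewrite -mulrBr cabsM; apply: (@le_lt_trans _ _ ((cabs c + 1) * cabs (u n - a))).
  by rewrite ler_wpM2r ?cabs_ge0 // lerDl.
by rewrite mulrC -ltr_pdivlMr // h.
Qed.

Lemma cvgC_subl u a c : cvgC u a -> cvgC (fun n => c - u n) (c - a).
Proof.
move=> h; have := cvgC_D (cvgC_cst c) (cvgC_M (-1) h).
by rewrite mulN1r; apply: cvgC_ext => n; rewrite mulN1r.
Qed.

Lemma cvgC_sum (I : Type) (s : seq I) (F : I -> nat -> R[i]) (L : I -> R[i]) :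
  (forall i, cvgC (F i) (L i)) ->
  cvgC (fun n => \sum_(i <- s) F i n) (\sum_(i <- s) L i).
Proof.
move=> h; elim: s => [|x s IH].
  by rewrite big_nil; apply: cvgC_ext (cvgC_cst 0) => n; rewrite big_nil.
rewrite big_cons; apply: cvgC_ext (cvgC_D (h x) IH) => n.
by rewrite big_cons.
Qed.

Lemma cvgC_uniform_seq (I : eqType) (s : seq I) (u : I -> nat -> R[i]) (a : I -> R[i])
    (e : I -> R) :
  (forall i, 0 < e i) -> (forall i, cvgC (u i) (a i)) ->
  exists N, forall n, (N <= n)%N -> forall i, i \in s -> cabs (u i n - a i) < e i.
Proof.
move=> he hc; elim: s => [|x s [N2 h2]]; first by exists 0%N.
have [N1 h1] := hc x _ (he x).
exists (maxn N1 N2) => n hn i; rewrite inE => /orP[/eqP ->|his].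
  exact: h1 (leq_trans (leq_maxl _ _) hn).
exact: h2 (leq_trans (leq_maxr _ _) hn) _ his.
Qed.
End ComplexLimits.

Section WeightedSup.
Variables (R : realType) (X : countType) (w : X -> R).
Hypothesis hw : forall k, 0 < w k.
Implicit Types a b : X -> R[i].

Lemma norm_ell_inf_ub a : ell_inf w a -> forall k, cabs (a k) * w k <= norm_ell_inf w a.
Proof.
move=> [M hM] k; apply: sup_upper_bound; last by exists k.
split; first by exists (cabs (a k) * w k), k.
by exists M => _ [j _ <-].
Qed.

Lemma norm_ell_inf_le a (B : R) : 0 <= B -> (forall k, cabs (a k) * w k <= B) ->
  norm_ell_inf w a <= B.
Proof.
move=> B0 hB; rewrite /norm_ell_inf.
have [hs|hns] := pselect (has_sup (range (fun k => cabs (a k) * w k))).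
  by apply: ge_sup; [exact: hs.1 | move=> _ [j _ <-]].
by rewrite sup_out.
Qed.

Lemma norm_ell_inf_ge0 a : 0 <= norm_ell_inf w a.
Proof.
rewrite /norm_ell_inf.
have [hs|hns] := pselect (has_sup (range (fun k => cabs (a k) * w k))).
  have [_ [k _ _]] := hs.1.
  apply: (le_trans _ (sup_upper_bound hs (ex_intro2 _ _ k I erefl))).
  by rewrite mulr_ge0 ?cabs_ge0 // ltW.
by rewrite sup_out.
Qed.

Lemma ell_inf_coord_le a k : ell_inf w a -> cabs (a k) <= norm_ell_inf w a / w k.
Proof. by move=> ha; rewrite ler_pdivlMr //; exact: norm_ell_inf_ub. Qed.

Lemma ell_inf0 : ell_inf w (fun _ => 0).
Proof. by exists 0 => k; rewrite cabs0 mul0r. Qed.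

Lemma ell_inf_lin c a b : ell_inf w a -> ell_inf w b -> ell_inf w (fun k => c * a k + b k).
Proof.
move=> [M1 h1] [M2 h2]; exists (cabs c * M1 + M2) => k.
apply: le_trans (_ : cabs c * (cabs (a k) * w k) + cabs (b k) * w k <= _).
  by rewrite mulrA -cabsM -mulrDl ler_wpM2r ?cabsD ?ltW.
by rewrite lerD // ler_wpM2l ?cabs_ge0.
Qed.

Lemma ell_infB a b : ell_inf w a -> ell_inf w b -> ell_inf w (fun k => a k - b k).
Proof.
move=> ha hb; have := ell_inf_lin (-1) hb ha.
by congr ell_inf; apply: funext => k; rewrite mulN1r addrC.
Qed.

Lemma norm_ell_infZ c a : ell_inf w a ->
  norm_ell_inf w (fun k => c * a k) = cabs c * norm_ell_inf w a.
Proof.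
move=> ha; have hca : ell_inf w (fun k => c * a k).
  by have := ell_inf_lin c ha ell_inf0; congr ell_inf; apply: funext => k; rewrite addr0.
apply/eqP; rewrite eq_le; apply/andP; split.
  apply: norm_ell_inf_le; first by rewrite mulr_ge0 ?cabs_ge0 ?norm_ell_inf_ge0.
  by move=> k; rewrite cabsM -mulrA ler_wpM2l ?cabs_ge0 ?norm_ell_inf_ub.
have [->|cn0] := eqVneq c 0; first by rewrite cabs0 mul0r norm_ell_inf_ge0.
have cp : 0 < cabs c.
  by rewrite lt_def cabs_ge0 andbT; apply: contra_neq cn0; exact: cabs_eq0.
rewrite mulrC -ler_pdivlMr //; apply: norm_ell_inf_le.
  by rewrite divr_ge0 ?norm_ell_inf_ge0 // ltW.
move=> k; rewrite ler_pdivlMr // mulrAC -cabsM [a k * c]mulrC.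
exact: norm_ell_inf_ub hca k.
Qed.

Lemma norm_ell_infD a b : ell_inf w a -> ell_inf w b ->
  norm_ell_inf w (fun k => a k + b k) <= norm_ell_inf w a + norm_ell_inf w b.
Proof.
move=> ha hb; apply: norm_ell_inf_le; first by rewrite addr_ge0 ?norm_ell_inf_ge0.
move=> k; apply: le_trans (_ : (cabs (a k) + cabs (b k)) * w k <= _).
  by rewrite ler_wpM2r ?cabsD ?ltW.
by rewrite mulrDl lerD ?norm_ell_inf_ub.
Qed.

Lemma ell_inf_cauchy_limit (an : nat -> X -> R[i]) a :
  (forall n, ell_inf w (an n)) ->
  (forall eps : R, 0 < eps -> exists N, forall n m, (N <= n)%N -> (N <= m)%N ->
     norm_ell_inf w (fun k => an n k - an m k) < eps) ->
  (forall k, cvgC (fun n => an n k) (a k)) ->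
  ell_inf w a /\ forall eps : R, 0 < eps -> exists N, forall n, (N <= n)%N ->
     norm_ell_inf w (fun k => an n k - a k) < eps.
Proof.
move=> han hc hlim.
have unif e : 0 < e -> exists N, forall n, (N <= n)%N -> forall k,
    cabs (an n k - a k) * w k <= e.
  move=> e0; have [N hN] := hc e e0; exists N => n hn k.
  rewrite -ler_pdivlMr //; apply: (cvgC_bound (N := N) _ (cvgC_subl (an n k) (hlim k))).
  move=> m hm; rewrite ler_pdivlMr //; apply: le_trans (ltW (hN n m hn hm)).
  exact: norm_ell_inf_ub (ell_infB (han n) (han m)) k.
split.
  have [N hN] := unif 1 ltr01; have [M hM] := han N.
  exists (M + 1) => k.
  apply: le_trans (_ : (cabs (an N k) + cabs (an N k - a k)) * w k <= _).
    by rewrite ler_wpM2r ?cabs_le_subr ?ltW.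
  by rewrite mulrDl lerD // hN.
move=> e e0; have [N hN] := unif (e / 2) (divr_gt0 e0 (ltr0Sn _ 1)).
exists N => n hn; apply: le_lt_trans (norm_ell_inf_le _ (hN n hn)) _.
  by rewrite divr_ge0 ?ltW.
lra.
Qed.
End WeightedSup.

Section Completion.
Variables (R : realType) (H : lmodType R[i]) (ip : H -> H -> R[i]).
Hypothesis hip : is_inner_product ip.
Variables (X : countType) (tpsi : X -> H).
Variables (Hb : lmodType R[i]) (iota : H -> Hb) (pair : Hb -> H -> R[i]).
Hypothesis hHb : is_sigma_completion ip tpsi iota pair.

Local Notation coef := (coef_tpsi tpsi pair).

Lemma in_H00_tpsi k : in_H00 tpsi (tpsi k).
Proof. by exists [fset k]%fset, (fun _ => 1); rewrite big_seq_fset1 scale1r. Qed.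

Lemma iotaDZ a f g : iota (a *: f + g) = a *: iota f + iota g.
Proof. by case: hHb. Qed.

Lemma pairDZ v a F G : in_H00 tpsi v -> pair (a *: F + G) v = a * pair F v + pair G v.
Proof. by case: hHb => _ h _ _ _ hv; apply: h. Qed.

Lemma pair_iota v f : in_H00 tpsi v -> pair (iota f) v = ip f v.
Proof. by case: hHb => _ _ h _ _ hv; apply: h. Qed.

Lemma pair_inj F : (forall v, in_H00 tpsi v -> pair F v = 0) -> F = 0.
Proof. by case: hHb => _ _ _ h _; apply: h. Qed.

Lemma sigma_dense F : exists fn : nat -> H, sigma_cvg tpsi pair (fun n => iota (fn n)) F.
Proof. by case: hHb => _ _ _ _ [h _]; exact: h. Qed.

Lemma sigma_complete Fn : sigma_cauchy tpsi pair Fn -> exists F, sigma_cvg tpsi pair Fn F.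
Proof. by case: hHb => _ _ _ _ [_ h]; exact: h. Qed.

Lemma iota0 : iota 0 = 0.
Proof.
have E := iotaDZ 1 0 0; rewrite scaler0 addr0 scale1r in E.
by apply: (addrI (iota 0)); rewrite addr0 -E.
Qed.

Lemma pair0 v : in_H00 tpsi v -> pair 0 v = 0.
Proof.
move=> hv; have E := pairDZ 1 0 0 hv; rewrite scaler0 addr0 mul1r in E.
by apply: (addrI (pair 0 v)); rewrite addr0 -E.
Qed.

Lemma pairZ v a F : in_H00 tpsi v -> pair (a *: F) v = a * pair F v.
Proof. by move=> hv; rewrite -[a *: F]addr0 (pairDZ _ _ _ hv) (pair0 hv) addr0. Qed.

Lemma pairB v F G : in_H00 tpsi v -> pair (F - G) v = pair F v - pair G v.
Proof.
move=> hv; rewrite -[F]scale1r -scaleN1r (pairDZ _ _ _ hv) (pairZ _ _ hv).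
by rewrite scale1r mul1r mulN1r.
Qed.

Lemma coef_iota f k : coef (iota f) k = ip f (tpsi k).
Proof. exact: pair_iota (in_H00_tpsi k). Qed.

Lemma coefDZ a F G k : coef (a *: F + G) k = a * coef F k + coef G k.
Proof. exact: pairDZ (in_H00_tpsi k). Qed.

Lemma coefZ a F k : coef (a *: F) k = a * coef F k.
Proof. exact: pairZ (in_H00_tpsi k). Qed.

Lemma coefB F G k : coef (F - G) k = coef F k - coef G k.
Proof. exact: pairB (in_H00_tpsi k). Qed.
(* The pairing with an element of H^00 is determined by the coefficients,
   because it is so on the dense subspace H. *)
Lemma pair_span F (S : {fset X}) c :
  pair F (\sum_(k <- S) c k *: tpsi k) = \sum_(k <- S) conjc (c k) * coef F k.
Proof.
have [fn hf] := sigma_dense F.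
have hv : in_H00 tpsi (\sum_(k <- S) c k *: tpsi k) by exists S, c.
apply: (cvgC_uniq (hf _ hv)).
apply: (@cvgC_ext _ (fun n => \sum_(k <- S) conjc (c k) * coef (iota (fn n)) k)).
  move=> n; rewrite pair_iota // ip_sumr //.
  by apply: eq_bigr => k _; rewrite coef_iota.
by apply: cvgC_sum => k; apply: cvgC_M; apply: hf; exact: in_H00_tpsi.
Qed.

Lemma sigma_cvg_coef Fn F :
  (forall k, cvgC (fun n => coef (Fn n) k) (coef F k)) -> sigma_cvg tpsi pair Fn F.
Proof.
move=> h v [S [c ->]]; rewrite pair_span.
apply: (@cvgC_ext _ (fun n => \sum_(k <- S) conjc (c k) * coef (Fn n) k)).
  by move=> n; rewrite pair_span.
by apply: cvgC_sum => k; apply: cvgC_M.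
Qed.

End Completion.

Section SummableTail.
Variables (R : realType) (X : countType) (t : X -> R).
Hypothesis t_bounded : exists M, forall F : {fset X}, \sum_(l <- F) t l <= M.

Lemma summable_tail_small (d : R) : 0 < d -> exists F1 : {fset X}, forall S : {fset X},
  \sum_(l <- [fset x in S | x \notin F1]%fset) t l < d.
Proof.
move=> d0; have [M hM] := t_bounded.
pose E : set R := fun x => exists F : {fset X}, x = \sum_(l <- F) t l.
have hs : has_sup E.
  split; first by exists 0, fset0; rewrite big_seq_fset0.
  by exists M => _ [F ->].
have [_ [F1 ->] hF1] := sup_adherent d0 hs.
exists F1 => S; set T := [fset x in S | x \notin F1]%fset.
have hU : \sum_(l <- (T `|` F1)%fset) t l <= sup E.
  by apply: sup_upper_bound => //; exists (T `|` F1)%fset.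
rewrite (big_fsetID _ (mem F1)) /= in hU.
have eF1 : \sum_(l <- [fset x in (T `|` F1)%fset | x \in F1]%fset) t l = \sum_(l <- F1) t l.
  by apply: eq_fbigl => x; rewrite !inE /=; case: (x \in F1); rewrite ?orbT ?andbF.
have eT : \sum_(l <- [fset x in (T `|` F1)%fset | x \notin F1]%fset) t l = \sum_(l <- T) t l.
  by apply: eq_fbigl => x; rewrite !inE /=; case: (x \in F1); rewrite ?orbT ?orbF ?andbT ?andbF.
rewrite eF1 eT in hU; lra.
Qed.
End SummableTail.

Section GramFixed.
Variables (R : realType) (H : lmodType R[i]) (ip : H -> H -> R[i]).
Variables (X : countType) (w : X -> R).
Hypothesis hw : forall k, 0 < w k.
Variables (psi tpsi : X -> H).
Hypothesis hG : gram_bounded ip w psi tpsi.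

Local Notation G := (gram ip psi tpsi).
Local Notation V := (gram_fixed ip w psi tpsi).

Lemma gram_bounded_ge0 : exists M : R, 0 <= M /\ forall k (F : {fset X}),
  \sum_(l <- F) cabs (G k l) * w k / w l <= M.
Proof.
have [M hM] := hG; exists `|M|; split => // k F.
exact: le_trans (hM k F) (ler_norm M).
Qed.

Lemma gram_term_le (b : X -> R[i]) (D : R) k l :
  cabs (b l) * w l <= D ->
  cabs (G k l * b l) <= D / w k * (cabs (G k l) * w k / w l).
Proof.
move=> hb; have wk := hw k; have wl := hw l.
have hb' : cabs (b l) <= D / w l by rewrite ler_pdivlMr.
rewrite cabsM; apply: le_trans (ler_wpM2l (cabs_ge0 _) hb') _.
by rewrite le_eqVlt; apply/orP; left; apply/eqP; field; rewrite !lt0r_neq0.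
Qed.

Lemma gram_sum_le (b : X -> R[i]) (D M : R) k (F : {fset X}) :
  0 <= D -> (forall l, l \in F -> cabs (b l) * w l <= D) ->
  \sum_(l <- F) cabs (G k l) * w k / w l <= M ->
  cabs (\sum_(l <- F) G k l * b l) <= D / w k * M.
Proof.
move=> D0 hb hM; apply: le_trans (cabs_sum _ _) _.
apply: le_trans (_ : \sum_(l <- F) D / w k * (cabs (G k l) * w k / w l) <= _).
  by rewrite big_seq [leRHS]big_seq; apply: ler_sum => l lF; exact: gram_term_le (hb l lF).
by rewrite -mulr_sumr ler_wpM2l // divr_ge0 // ltW.
Qed.

(* The rows of G are summable against the weights, so the contribution of
   the indices outside a suitable finite set is uniformly small on bounded
   sets of l^infty_w. *)
Lemma gram_tail_small k (B e : R) : 0 < e -> exists F1 : {fset X},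
  forall (b : X -> R[i]) (S : {fset X}), (forall l, cabs (b l) * w l <= B) ->
  cabs (\sum_(l <- [fset x in S | x \notin F1]%fset) G k l * b l) < e.
Proof.
move=> e0; have [M [_ hM]] := gram_bounded_ge0; have wk := hw k.
set r := `|B| / w k.
have r0 : 0 <= r by rewrite divr_ge0 ?normr_ge0 ?ltW.
have d0 : 0 < e / (r + 1) by rewrite divr_gt0 //; lra.
pose t l := cabs (G k l) * w k / w l.
have [F1 hF1] := summable_tail_small (ex_intro _ M (hM k)) d0.
exists F1 => b S hb; apply: le_lt_trans (cabs_sum _ _) _.
apply: (@le_lt_trans _ _ (r * \sum_(l <- [fset x in S | x \notin F1]%fset) t l)).
  rewrite mulr_sumr; apply: ler_sum => l _; apply: gram_term_le.
  exact: le_trans (hb l) (ler_norm B).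
apply: (@le_lt_trans _ _ (r * (e / (r + 1)))); first by rewrite ler_wpM2l // ltW.
rewrite mulrA ltr_pdivrMr; [nra | lra].
Qed.

Lemma gram_fixed0 : V (fun _ => 0).
Proof.
split; first exact: ell_inf0.
move=> k e e0; exists fset0 => F _.
by rewrite big1 ?subrr ?cabs0 // => l _; rewrite mulr0.
Qed.

Lemma gram_fixed_lin c a b : V a -> V b -> V (fun k => c * a k + b k).
Proof.
move=> [ha hau] [hb hbu]; split; first exact: (ell_inf_lin hw c ha hb).
move=> k e e0.
have c1 : 0 < cabs c + 1 by have := cabs_ge0 c; lra.
have e2 : 0 < e / 2 by rewrite divr_gt0.
have [F1 h1] := hau k _ (divr_gt0 e2 c1); have [F2 h2] := hbu k _ e2.
exists (F1 `|` F2)%fset => F hF.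
have hF1 := h1 F (fsubset_trans (fsubsetUl _ _) hF).
have hF2 := h2 F (fsubset_trans (fsubsetUr _ _) hF).
have -> : c * a k + b k - \sum_(l <- F) G k l * (c * a l + b l) =
    c * (a k - \sum_(l <- F) G k l * a l) + (b k - \sum_(l <- F) G k l * b l).
  have -> : \sum_(l <- F) G k l * (c * a l + b l) =
      c * \sum_(l <- F) G k l * a l + \sum_(l <- F) G k l * b l.
    by rewrite mulr_sumr -big_split; apply: eq_bigr => l _ /=; ring.
  ring.
apply: le_lt_trans (cabsD _ _) _; rewrite cabsM.
have : cabs c * cabs (a k - \sum_(l <- F) G k l * a l) <= e / 2.
  apply: le_trans (_ : (cabs c + 1) * cabs (a k - \sum_(l <- F) G k l * a l) <= _).
    by rewrite ler_wpM2r ?cabs_ge0 // lerDl.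
  by rewrite mulrC -ler_pdivlMr // ltW.
lra.
Qed.

Lemma gram_fixed_closed (an : nat -> X -> R[i]) (a : X -> R[i]) :
  (forall n, V (an n)) -> ell_inf w a ->
  (forall eps : R, 0 < eps -> exists N, forall n, (N <= n)%N ->
     norm_ell_inf w (fun k => an n k - a k) < eps) ->
  V a.
Proof.
move=> han ha hc; split => // k e e0.
have [M [M0 hM]] := gram_bounded_ge0; have wk := hw k.
have e2 : 0 < e / 2 by rewrite divr_gt0.
have [N hN] := hc _ (divr_gt0 (mulr_gt0 e2 wk) (ltr_pwDl ltr01 M0)).
have D_lt := hN N (leqnn N); set D := norm_ell_inf w _ in D_lt.
have [hanN hanu] := han N.
have D0 : 0 <= D := norm_ell_inf_ge0 hw _.
have [F0 h0] := hanu k _ e2; exists F0 => F hF.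
have fixed_N := h0 F hF.
have near_k : cabs (an N k - a k) <= D / w k := ell_inf_coord_le hw k (ell_infB hw hanN ha).
have sum_le : cabs (\sum_(l <- F) G k l * (an N l - a l)) <= D / w k * M.
  by apply: gram_sum_le => // l _; exact: norm_ell_inf_ub (ell_infB hw hanN ha) l.
have -> : a k - \sum_(l <- F) G k l * a l =
    - (an N k - a k) + (an N k - \sum_(l <- F) G k l * an N l) +
    \sum_(l <- F) G k l * (an N l - a l).
  have -> : \sum_(l <- F) G k l * (an N l - a l) =
      \sum_(l <- F) G k l * an N l - \sum_(l <- F) G k l * a l.
    by rewrite -sumrB; apply: eq_bigr => l _; rewrite mulrBr.
  ring.
apply: le_lt_trans (cabsD _ _) _; apply: le_lt_trans (lerD (cabsD _ _) (lexx _)) _.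
have : D / w k * (1 + M) < e / 2 by rewrite mulrAC ltr_pdivrMr // -ltr_pdivlMr // ltr_pwDl.
rewrite cabsN mulrDr mulr1 => *; lra.
Qed.

Lemma gram_fixed_closed_subspace : closed_subspace_ell_inf w V.
Proof.
split.
- by move=> a [].
- exact: gram_fixed0.
- by move=> c a b; exact: gram_fixed_lin.
- by move=> an a han ha hc; exact: gram_fixed_closed hc.
Qed.

(* Dominated convergence for the series (G b)_k: the finitely many leading
   terms converge, and gram_tail_small controls the rest uniformly. *)
Lemma gram_fixed_pointwise_limit (bn : nat -> X -> R[i]) (a : X -> R[i]) (B : R) :
  (forall n k, cabs (bn n k) * w k <= B) ->
  (forall k, cvgC (fun n => bn n k) (a k)) ->
  (forall n k, uncond_sum (@cabs R) (fun l => G k l * bn n l) (bn n k)) ->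
  forall k, uncond_sum (@cabs R) (fun l => G k l * a l) (a k).
Proof.
move=> hB hcv hfix k e e0.
have [M [M0 hM]] := gram_bounded_ge0; have wk := hw k.
have ha l : cabs (a l) * w l <= B.
  rewrite -ler_pdivlMr //; apply: (cvgC_bound (N := 0) _ (hcv l)) => n _.
  by rewrite ler_pdivlMr.
have diff_le n l : cabs (bn n l - a l) * w l <= B + B.
  apply: le_trans (_ : (cabs (bn n l) + cabs (a l)) * w l <= _).
    by apply: ler_wpM2r; [exact: ltW | have := cabsD (bn n l) (- a l); rewrite cabsN].
  by rewrite mulrDl lerD.
have e4 : 0 < e / 4 by rewrite divr_gt0.
set q := e / 4 / (1 + M).
have q0 : 0 < q by rewrite divr_gt0 // ltr_pwDl.
have qM : q + q * M = e / 4 by rewrite /q; field; rewrite lt0r_neq0 // ltr_pwDl.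
have [F1 hF1] := gram_tail_small k (B + B) e4.
have [N hN] := cvgC_uniform_seq (k :: F1) (u := fun l n => bn n l)
  (fun l => divr_gt0 (mulr_gt0 q0 wk) (hw l)) hcv.
have [F0 h0] := hfix N k _ e4.
exists (F0 `|` F1)%fset => S hS.
have near_k : cabs (bn N k - a k) < q.
  by have := hN N (leqnn N) k (mem_head _ _); rewrite mulfK ?lt0r_neq0.
have fixed_N := h0 S (fsubset_trans (fsubsetUl _ _) hS).
have head_le : cabs (\sum_(l <- [fset x in S | x \in F1]%fset) G k l * (bn N l - a l)) <= q * M.
  rewrite -[q in q * M](mulfK (lt0r_neq0 wk)); apply: gram_sum_le => //.
    by rewrite mulr_ge0 ?ltW.
  move=> l; rewrite !inE /= => /andP[_ lF1].
  have := hN N (leqnn N) l; rewrite inE lF1 orbT => /(_ isT) h.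
  by rewrite -ler_pdivlMr // ltW.
have tail_lt := hF1 (fun l => bn N l - a l) S (diff_le N).
have -> : a k - \sum_(l <- S) G k l * a l =
    - (bn N k - a k) + (bn N k - \sum_(l <- S) G k l * bn N l) +
    \sum_(l <- S) G k l * (bn N l - a l).
  have -> : \sum_(l <- S) G k l * (bn N l - a l) =
      \sum_(l <- S) G k l * bn N l - \sum_(l <- S) G k l * a l.
    by rewrite -sumrB; apply: eq_bigr => l _; rewrite mulrBr.
  ring.
rewrite [X in _ + X](big_fsetID _ (mem F1)) /=.
apply: le_lt_trans (cabsD _ _) _.
apply: le_lt_trans (lerD (cabsD _ _) (cabsD _ _)) _.
rewrite cabsN; lra.
Qed.
End GramFixed.

Section CoefficientsFixed.
Variables (R : realType) (H : lmodType R[i]) (ip : H -> H -> R[i]).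
Hypothesis hip : is_inner_product ip.
Variables (X : countType) (psi tpsi : X -> H).
Hypothesis hrec : forall f, uncond_sum (normH ip) (fun k => ip f (tpsi k) *: psi k) f.

(* pair the reconstruction f = sum_l <f, tpsi_l> psi_l with tpsi_k *)
Lemma gram_fixed_coef f k :
  uncond_sum (@cabs R) (fun l => gram ip psi tpsi k l * ip f (tpsi l)) (ip f (tpsi k)).
Proof.
move=> e e0; set c := normH ip (tpsi k) + 1.
have c0 : 0 < c by have := normH_ge0 ip (tpsi k); rewrite /c; lra.
have [F0 h0] := hrec f (divr_gt0 e0 c0).
exists F0 => F hF; have := h0 F hF.
set r := f - \sum_(l <- F) ip f (tpsi l) *: psi l => hr.
have -> : ip f (tpsi k) - \sum_(l <- F) gram ip psi tpsi k l * ip f (tpsi l) = ip r (tpsi k).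
  rewrite ipB // ip_suml //; congr (_ - _); apply: eq_bigr => l _.
  by rewrite ipZ // /gram mulrC.
apply: le_lt_trans (cauchy_schwarz hip _ _) _.
apply: (@le_lt_trans _ _ (normH ip r * c)); last by rewrite -ltr_pdivlMr.
by rewrite ler_wpM2l ?normH_ge0 // lerDl.
Qed.
End CoefficientsFixed.

Section Exhaustion.
Variable X : countType.

Definition exhaust (N : nat) : {fset X} :=
  seq_fset tt (pmap (@choice.unpickle X) (iota 0 N)).

Lemma exhaust_sub (F0 : {fset X}) : exists N0, forall N, (N0 <= N)%N -> fsubset F0 (exhaust N).
Proof.
exists (\max_(x <- F0) (choice.pickle x).+1)%N => N hN.
apply/fsubsetP => x xF0; rewrite /exhaust seq_fsetE mem_pmap.
apply/mapP; exists (choice.pickle x); last by rewrite choice.pickleK.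
rewrite mem_iota add0n /=; apply: leq_trans hN.
by rewrite (big_rem x) //= leq_maxl.
Qed.
End Exhaustion.

Section Hinf.
Variables (R : realType) (H : lmodType R[i]) (ip : H -> H -> R[i]).
Hypothesis hip : is_inner_product ip.
Variables (X : countType) (w : X -> R).
Hypothesis hw : forall k, 0 < w k.
Variables (psi tpsi : X -> H).
Hypothesis hrec : forall f, uncond_sum (normH ip) (fun k => ip f (tpsi k) *: psi k) f.
Hypothesis hG : gram_bounded ip w psi tpsi.
Variables (Hb : lmodType R[i]) (iota : H -> Hb) (pair : Hb -> H -> R[i]).
Hypothesis hHb : is_sigma_completion ip tpsi iota pair.

Local Notation Hi := (Hinf ip tpsi iota pair w).
Local Notation coef := (coef_tpsi tpsi pair).
Local Notation nrm := (norm_Hinf tpsi pair w).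
Local Notation V := (gram_fixed ip w psi tpsi).

Lemma Hinf_ell F : Hi F -> ell_inf w (coef F).
Proof.
move=> [fn [hc [M hM]]]; exists M => k; rewrite -ler_pdivlMr //.
apply: (cvgC_bound (N := 0) _ (hc _ (in_H00_tpsi tpsi k))) => n _.
by rewrite -[pair _ _]/(coef _ k) (coef_iota hHb) ler_pdivlMr.
Qed.

Lemma Hinf_gram_fixed F : Hi F -> V (coef F).
Proof.
move=> hF; split; first exact: Hinf_ell.
case: hF => fn [hc [M hM]].
apply: (gram_fixed_pointwise_limit hw hG (bn := fun n k => ip (fn n) (tpsi k)) hM).
  move=> k; apply: cvgC_ext (hc _ (in_H00_tpsi tpsi k)) => n.
  exact: (coef_iota hHb).
by move=> n k; exact: gram_fixed_coef.
Qed.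

(* the partial sums of sum_l a_l psi_l approximate the element with coefficients a *)
Lemma gram_fixed_Hinf F : V (coef F) -> Hi F.
Proof.
move=> [Fell Ffix]; have [M [M0 hM]] := gram_bounded_ge0 hG.
pose fN N := \sum_(l <- exhaust X N) coef F l *: psi l.
have coef_fN N k :
    coef (iota (fN N)) k = \sum_(l <- exhaust X N) gram ip psi tpsi k l * coef F l.
  rewrite (coef_iota hHb) ip_suml //.
  by apply: eq_bigr => l _; rewrite ipZ // /gram mulrC.
exists fN; split.
  apply: (sigma_cvg_coef hip hHb) => k.
  apply: cvgC_ext (fun N => esym (coef_fN N k)) _.
  move=> e e0; have [F0 h0] := Ffix k e e0; have [N0 hN0] := exhaust_sub F0.
  by exists N0 => N hN; rewrite cabsB; exact: h0 _ (hN0 N hN).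
exists (norm_ell_inf w (coef F) * M) => N k.
rewrite -(coef_iota hHb) coef_fN -ler_pdivlMr // mulrAC.
apply: gram_sum_le => //; first exact: norm_ell_inf_ge0.
by move=> l _; exact: norm_ell_inf_ub.
Qed.

Lemma Hinf0 : Hi 0.
Proof.
exists (fun _ => 0); split.
  by move=> v hv e e0; exists 0%N => n _; rewrite (iota0 hHb) subrr cabs0.
by exists 0 => n k; rewrite ip0l // cabs0 mul0r.
Qed.

Lemma HinfDZ a F G : Hi F -> Hi G -> Hi (a *: F + G).
Proof.
move=> [fn [hf [M1 h1]]] [gn [hg [M2 h2]]].
exists (fun n => a *: fn n + gn n); split.
  move=> v hv; rewrite (pairDZ hHb _ _ _ hv).
  apply: (cvgC_ext (u := fun n => a * pair (iota (fn n)) v + pair (iota (gn n)) v)).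
    by move=> n; rewrite (iotaDZ hHb) (pairDZ hHb _ _ _ hv).
  by apply: cvgC_D; [apply: cvgC_M; exact: hf | exact: hg].
exists (cabs a * M1 + M2) => n k; rewrite ipDZ //.
apply: le_trans (_ : cabs a * (cabs (ip (fn n) (tpsi k)) * w k)
    + cabs (ip (gn n) (tpsi k)) * w k <= _).
  by rewrite mulrA -cabsM -mulrDl ler_wpM2r ?cabsD ?ltW.
by rewrite lerD // ler_wpM2l ?cabs_ge0.
Qed.

Lemma HinfB F G : Hi F -> Hi G -> Hi (F - G).
Proof. by move=> hF hG'; rewrite addrC -scaleN1r; exact: HinfDZ. Qed.

Lemma norm_HinfB F G : nrm (F - G) = norm_ell_inf w (fun k => coef F k - coef G k).
Proof. by congr norm_ell_inf; apply: funext => k; rewrite (coefB hHb). Qed.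

Lemma norm_Hinf_eq0 F : Hi F -> nrm F = 0 -> F = 0.
Proof.
move=> hF h0; have coef0 k : coef F k = 0.
  apply: cabs_eq0; have := norm_ell_inf_ub (Hinf_ell hF) k.
  rewrite -/(nrm F) h0 => h; apply/eqP.
  by rewrite -(mulIr_eq0 _ (mulIf (lt0r_neq0 (hw k)))) eq_le h mulr_ge0 ?cabs_ge0 ?ltW.
apply: (pair_inj hHb) => v [S [c ->]]; rewrite (pair_span hip hHb).
by apply: big1 => k _; rewrite coef0 mulr0.
Qed.

Lemma norm_HinfZ a F : Hi F -> nrm (a *: F) = cabs a * nrm F.
Proof.
move=> hF; rewrite -(norm_ell_infZ hw a (Hinf_ell hF)).
by congr norm_ell_inf; apply: funext => k; rewrite (coefZ hHb).
Qed.

Lemma norm_HinfD F G : Hi F -> Hi G -> nrm (F + G) <= nrm F + nrm G.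
Proof.
move=> hF hG'.
have -> : nrm (F + G) = norm_ell_inf w (fun k => coef F k + coef G k).
  by congr norm_ell_inf; apply: funext => k; rewrite -[F]scale1r (coefDZ hHb) mul1r scale1r.
rewrite /norm_Hinf. exact (norm_ell_infD hw (Hinf_ell hF) (Hinf_ell hG')).
Qed.

Lemma pair_span_le F (S : {fset X}) c : Hi F ->
  cabs (pair F (\sum_(l <- S) c l *: tpsi l)) <= nrm F * \sum_(l <- S) cabs (c l) / w l.
Proof.
move=> hF; rewrite (pair_span hip hHb) mulr_sumr; apply: le_trans (cabs_sum _ _) _.
apply: ler_sum => l _; rewrite cabsM cabsJ mulrCA ler_wpM2l ?cabs_ge0 //.
exact: (ell_inf_coord_le hw l (Hinf_ell hF)).
Qed.

Lemma Hinf_sigma_cauchy (fn : nat -> Hb) : (forall n, Hi (fn n)) ->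
  (forall eps : R, 0 < eps -> exists N, forall n m, (N <= n)%N -> (N <= m)%N ->
      nrm (fn n - fn m) < eps) ->
  sigma_cauchy tpsi pair fn.
Proof.
move=> hfn hc v [S [c ->]] e e0.
set K := \sum_(l <- S) cabs (c l) / w l.
have K0 : 0 <= K by apply: sumr_ge0 => l _; rewrite divr_ge0 ?cabs_ge0 ?ltW.
have K1 : 0 < K + 1 by lra.
have [N hN] := hc (e / (K + 1)) (divr_gt0 e0 K1).
exists N => n m hn hm; rewrite -(pairB hHb); last by exists S, c.
apply: le_lt_trans (pair_span_le S c (HinfB (hfn n) (hfn m))) _.
have := hN n m hn hm; rewrite ltr_pdivlMr // mulrDr mulr1.
have D0 : 0 <= nrm (fn n - fn m) := norm_ell_inf_ge0 hw _.
by rewrite -/K => *; lra.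
Qed.

Lemma Hinf_complete (fn : nat -> Hb) : (forall n, Hi (fn n)) ->
  (forall eps : R, 0 < eps -> exists N, forall n m, (N <= n)%N -> (N <= m)%N ->
      nrm (fn n - fn m) < eps) ->
  exists F, Hi F /\ forall eps : R, 0 < eps -> exists N, forall n, (N <= n)%N ->
      nrm (fn n - F) < eps.
Proof.
move=> hfn hc.
have [F hF] := sigma_complete hHb (Hinf_sigma_cauchy hfn hc).
have [Fell Fcvg] := ell_inf_cauchy_limit hw (fun n => Hinf_ell (hfn n))
  (fun e e0 => ex_ind (fun N hN => ex_intro _ N (fun n m hn hm =>
     eq_ind _ (fun x => x < e) (hN n m hn hm) _ (norm_HinfB _ _))) (hc e e0))
  (fun k => hF _ (in_H00_tpsi tpsi k)).
have Ffix : V (coef F) := gram_fixed_closed hw hG (fun n => Hinf_gram_fixed (hfn n)) Fell Fcvg.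
exists F; split; first exact: gram_fixed_Hinf.
by move=> e e0; have [N hN] := Fcvg e e0; exists N => n hn; rewrite norm_HinfB; exact: hN.
Qed.
End Hinf.

Local Close Scope complex_scope.

Theorem mainTheorem10
  (R : realType) (H : lmodType R[i]) (ip : H -> H -> R[i])
  (hip : is_inner_product ip) (hcomplete : hilbert_complete ip)
  (hsep : hilbert_separable ip)
  (X : countType) (w : X -> R) (hw : forall k, 0 < w k)
  (psi tpsi : X -> H)
  (hframe : is_frame ip psi) (hdual : is_dual_frame ip psi tpsi)
  (hG : gram_bounded ip w psi tpsi)
  (Hb : lmodType R[i]) (iota : H -> Hb) (pair : Hb -> H -> R[i])
  (hHb : is_sigma_completion ip tpsi iota pair) :
  closed_subspace_ell_inf w (gram_fixed ip w psi tpsi)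
  /\ (forall F, Hinf ip tpsi iota pair w F -> ell_inf w (coef_tpsi tpsi pair F))
  /\ banach_subspace (Hinf ip tpsi iota pair w) (norm_Hinf tpsi pair w).
Proof.
have hrec f := (hdual.2 f).1.
split; first exact (gram_fixed_closed_subspace hw hG).
split; first exact (Hinf_ell hw hHb).
split.
- exact (Hinf0 hip w hHb).
- exact (HinfDZ hip hw hHb).
- exact (conj (norm_Hinf_eq0 hip hw hHb) (norm_HinfZ hw hHb)).
- exact (norm_HinfD hw hHb).
- exact (Hinf_complete hip hw hrec hG hHb).
Qed.
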